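(* Let $K,G,\eta,\bar\eta,\xi,c_0>0$ and let $H:\mathbb R_+\to\mathbb R_+$ be nondecreasing, strongly semismooth, with $H(0)=0$. Let $f(\boldsymbol\sigma,\kappa)=\hat f(p(\boldsymbol\sigma),\varrho(\boldsymbol\sigma),\kappa)=\sqrt{\tfrac12}\varrho(\boldsymbol\sigma)+\eta p(\boldsymbol\sigma)-\xi(c_0+\kappa)$. Let $\boldsymbol\sigma^{tr}\in\mathbb R^{3\times3}_{sym}$, $\bar\varepsilon^{p,tr}\ge0$ be given, $p^{tr}=p(\boldsymbol\sigma^{tr})$, $\varrho^{tr}=\varrho(\boldsymbol\sigma^{tr})$, and define for $\gamma\ge0$ $$q_{tr}(\gamma)=\sqrt{\tfrac12}\big(\varrho^{tr}-\gamma G\sqrt2\big)^++\eta(p^{tr}-\gamma K\bar\eta)-\xi\big(c_0+H(\bar\varepsilon^{p,tr}+\gamma\xi)\big).$$ Assume $f(\boldsymbol\sigma^{tr},H(\bar\varepsilon^{p,tr}))>0$. Then there exists a unique $\triangle\lambda>0$ with $q_{tr}(\triangle\lambda)=0$. Furthermore, each of the following problems has a unique solution: (R) find $(p,\varrho,\bar\varepsilon^p,\triangle\lambda)$ with $p=p^{tr}-\triangle\lambda K\bar\eta$, $\varrho=(\varrho^{tr}-\triangle\lambda G\sqrt2)^+$, $\bar\varepsilon^p=\bar\varepsilon^{p,tr}+\triangle\lambda\xi$, $\hat f(p,\varrho,H(\bar\varepsilon^p))=0$; (P) find $(\boldsymbol\sigma,\bar\varepsilon^p,\triangle\lambda)$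 with $\boldsymbol\sigma=\boldsymbol\sigma^{tr}-\triangle\lambda(G\sqrt2\hat{\mathbf n}+K\bar\eta\mathbf I)$ for some $\hat{\mathbf n}\in\partial\varrho(\boldsymbol\sigma)$, $\bar\varepsilon^p=\bar\varepsilon^{p,tr}+\triangle\lambda\xi$, $f(\boldsymbol\sigma,H(\bar\varepsilon^p))=0$; (Q) find $(\boldsymbol\sigma,\bar\varepsilon^p,\triangle\lambda)$ with the same two equations as in (P) and $\triangle\lambda\ge0$, $f(\boldsymbol\sigma,H(\bar\varepsilon^p))\le0$, $\triangle\lambda f(\boldsymbol\sigma,H(\bar\varepsilon^p))=0$. In addition, if $q_{tr}(\varrho^{tr}/(G\sqrt2))<0$ then $\triangle\lambda\in(0,\varrho^{tr}/(G\sqrt2))$ and $\varrho>0$; conversely, if $q_{tr}(\varrho^{tr}/(G\sqrt2))\ge0$ then $\triangle\lambda\ge\varrho^{tr}/(G\sqrt2)$ and $\varrho=0$ (where $\varrho$ is the corresponding component of the solution of (R)).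
   Context: $\mathbb R^{3\times3}_{sym}$: real symmetric $3\times3$ matrices with Frobenius product '':'' and norm; $\mathbf I$ identity; $p(\boldsymbol\sigma)=\frac13\mathbf I:\boldsymbol\sigma$, $\mathbf s(\boldsymbol\sigma)=\boldsymbol\sigma-p(\boldsymbol\sigma)\mathbf I$, $\varrho(\boldsymbol\sigma)=\|\mathbf s(\boldsymbol\sigma)\|$; $(x)^+=\max\{0,x\}$. $\partial\varrho(\boldsymbol\sigma)=\{\mathbf s(\boldsymbol\sigma)/\varrho(\boldsymbol\sigma)\}$ if $\varrho(\boldsymbol\sigma)>0$, and $\{\hat{\mathbf n}\in\mathbb R^{3\times3}_{sym}:\mathbf I:\hat{\mathbf n}=0,\|\hat{\mathbf n}\|\le1\}$ if $\varrho(\boldsymbol\sigma)=0$. Strong semismoothness: local Lipschitz continuity, directional differentiability, and $F(x+h)-F(x)-Vh=O(\|h\|^2)$ for all $V\in\partial F(x+h)$ (Clarke generalized Jacobian) as $h\to0$. *)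

From HB Require Import structures.
From mathcomp Require Import all_boot all_order all_algebra.
From mathcomp Require Import all_classical all_reals all_analysis.
Set Implicit Arguments. Unset Strict Implicit. Unset Printing Implicit Defensive.
Import Order.TTheory GRing.Theory Num.Theory.
Import numFieldNormedType.Exports.
Local Open Scope classical_set_scope.
Local Open Scope ring_scope.

Section Defs.
Variable R : realType.

Definition sym3 (A : 'M[R]_3) : Prop := A^T = A.

Definition frob_dot (A B : 'M[R]_3) : R := \sum_(i < 3) \sum_(j < 3) A i j * B i j.
Definition frob_norm (A : 'M[R]_3) : R := Num.sqrt (frob_dot A A).

Definition Id3 : 'M[R]_3 := 1%:M.

Definition pmean (A : 'M[R]_3) : R := 3^-1 * frob_dot Id3 A.
Definition dev (A : 'M[R]_3) : 'M[R]_3 := A - pmean A *: Id3.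
Definition rho (A : 'M[R]_3) : R := frob_norm (dev A).

Definition subdiff_rho (A : 'M[R]_3) : set 'M[R]_3 :=
  [set n | (0 < rho A /\ n = (rho A)^-1 *: dev A) \/
           (rho A = 0 /\ sym3 n /\ frob_dot Id3 n = 0 /\ frob_norm n <= 1)].

Definition ppart (x : R) : R := Num.max 0 x.

Definition fhat (eta xi c0 p r k : R) : R :=
  Num.sqrt (2^-1) * r + eta * p - xi * (c0 + k).
Definition fyield (eta xi c0 : R) (sigma : 'M[R]_3) (k : R) : R :=
  fhat eta xi c0 (pmean sigma) (rho sigma) k.

Definition qtr (K G eta etab xi c0 : R) (H : R -> R) (sigtr : 'M[R]_3) (epstr gam : R) : R :=
  Num.sqrt (2^-1) * ppart (rho sigtr - gam * G * Num.sqrt 2)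
  + eta * (pmean sigtr - gam * K * etab)
  - xi * (c0 + H (epstr + gam * xi)).

(** Strong semismoothness of a scalar function H defined on R_+ = [0, +oo).
    Only the values of H on [0, +oo) are used. *)
Definition nonneg_set : set R := [set x | 0 <= x].

Definition loc_lipschitz_on (D : set R) (H : R -> R) : Prop :=
  forall x, D x -> exists L d : R, 0 < d /\
    forall y z, D y -> D z -> `|y - x| < d -> `|z - x| < d ->
      `|H y - H z| <= L * `|y - z|.

Definition dir_diff_nonneg (H : R -> R) (x : R) : Prop :=
  forall d : R, (0 < x \/ 0 <= d) ->
    exists l : R, (fun t : R => (H (x + t * d) - H x) / t) @ 0^'+ --> l.

Definition bsubdiff (H : R -> R) (x : R) : set R :=
  [set v | exists u : nat -> R,
     (forall k, 0 < u k /\ derivable H (u k) 1) /\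
     u @ \oo --> x /\ (fun k => 'D_1 H (u k)) @ \oo --> v].

(** Clarke generalized Jacobian = convex hull of the B-subdifferential
    (in dimension one: all points between two points of it) *)
Definition clarke (H : R -> R) (x : R) : set R :=
  [set v | exists a b, bsubdiff H x a /\ bsubdiff H x b /\ a <= v /\ v <= b].

Definition strongly_semismooth_nonneg (H : R -> R) : Prop :=
  loc_lipschitz_on nonneg_set H /\
  forall x, 0 <= x ->
    dir_diff_nonneg H x /\
    exists C d : R, 0 < d /\
      forall h, 0 <= x + h -> `|h| < d ->
        forall V, clarke H (x + h) V ->
          `|H (x + h) - H x - V * h| <= C * h ^+ 2.

Definition probR (K G eta etab xi c0 : R) (H : R -> R) (sigtr : 'M[R]_3) (epstr : R)
  (p r e dl : R) : Prop :=
  0 <= dl /\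
  p = pmean sigtr - dl * K * etab /\
  r = ppart (rho sigtr - dl * G * Num.sqrt 2) /\
  e = epstr + dl * xi /\
  fhat eta xi c0 p r (H e) = 0.

Definition probP (K G eta etab xi c0 : R) (H : R -> R) (sigtr : 'M[R]_3) (epstr : R)
  (sigma : 'M[R]_3) (e dl : R) : Prop :=
  0 <= dl /\ sym3 sigma /\
  (exists n, subdiff_rho sigma n /\
     sigma = sigtr - dl *: ((G * Num.sqrt 2) *: n + (K * etab) *: Id3)) /\
  e = epstr + dl * xi /\
  fyield eta xi c0 sigma (H e) = 0.

Definition probQ (K G eta etab xi c0 : R) (H : R -> R) (sigtr : 'M[R]_3) (epstr : R)
  (sigma : 'M[R]_3) (e dl : R) : Prop :=
  sym3 sigma /\
  (exists n, subdiff_rho sigma n /\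
     sigma = sigtr - dl *: ((G * Num.sqrt 2) *: n + (K * etab) *: Id3)) /\
  e = epstr + dl * xi /\
  0 <= dl /\ fyield eta xi c0 sigma (H e) <= 0 /\
  dl * fyield eta xi c0 sigma (H e) = 0.

End Defs.

From HB Require Import structures.
From mathcomp Require Import all_boot all_order all_algebra.
From mathcomp Require Import all_classical all_reals all_analysis.
Import Order.TTheory GRing.Theory Num.Theory.
Import numFieldNormedType.Exports.
Local Open Scope classical_set_scope.
Local Open Scope ring_scope.
From mathcomp Require Import ring lra.

(* The trial function [q_tr] is continuous (H is locally Lipschitz on [0, +oo)),
   strictly decreasing (its pressure part decreases linearly, the other parts do
   not increase), equals the trial yield value [f > 0] at 0 and is negative for
   large arguments; hence it has exactly one positive root.
   If [sigma = sigtr - dl (a n + b I)] with [n] in the subdifferential of [rho] at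
   [sigma], the mean stress of [sigma] is [p(sigtr) - dl b], and since [n] is the
   unit normal of the deviator of [sigma] (or lies in the unit ball when that
   deviator vanishes), the deviator of [sigma] is a radial shrinkage of the trial
   deviator with [rho(sigma) = (rho(sigtr) - dl a)^+].  Thus
   [f(sigma, H(eps)) = q_tr(dl)] and [sigma] is determined by [dl]: each of (R),
   (P), (Q) forces [dl] to be the root of [q_tr] (for (Q), [dl = 0] is excluded
   by [q_tr(0) > 0]), and the root does produce a solution. *)

Set Implicit Arguments.
Unset Strict Implicit.
Unset Printing Implicit Defensive.

Section Positive_part.
Variable R : realType.
Implicit Types x y : R.

Lemma ppart_id x : 0 <= x -> ppart x = x.
Proof. by move=> x_ge0; rewrite /ppart max_r. Qed.

Lemma ppart_eq0 x : x <= 0 -> ppart x = 0.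
Proof. by move=> x_le0; rewrite /ppart max_l. Qed.

Lemma ppart_ge0 x : 0 <= ppart x.
Proof. by rewrite /ppart le_max lexx. Qed.

Lemma ppart_gt0 x : (0 < ppart x) = (0 < x).
Proof. by rewrite /ppart lt_max ltxx. Qed.

Lemma ppart_le x y : x <= y -> ppart x <= ppart y.
Proof. by move=> le_xy; rewrite /ppart ge_max !le_max lexx le_xy orbT. Qed.

Lemma continuous_ppart : continuous (@ppart R).
Proof. by move=> x; apply: continuous_max; [exact: cst_continuous | exact: cvg_id]. Qed.

End Positive_part.

Section Roots_on_nonneg_reals.
Variable R : realType.

Lemma loc_lipschitz_continuous_comp (H u : R -> R) (x : R) :
  loc_lipschitz_on (@nonneg_set R) H -> (forall y, 0 <= u y) ->
  {for x, continuous u} -> {for x, continuous (H \o u)}.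
Proof.
move=> H_lip u_ge0 u_cont.
have [L [d [d_gt0 HL]]] := H_lip (u x) (u_ge0 x).
apply/cvgrPdist_lt => e e_gt0.
have L1_gt0 : 0 < `|L| + 1 by rewrite ltr_wpDl.
have m_gt0 : 0 < Num.min d (e / (`|L| + 1)) by rewrite lt_min d_gt0 divr_gt0.
move/cvgrPdist_lt : u_cont => /(_ _ m_gt0) u_near.
near=> y.
have : `|u x - u y| < Num.min d (e / (`|L| + 1)) by near: y.
rewrite lt_min => /andP[uy_d uy_e].
have := HL (u x) (u y) (u_ge0 x) (u_ge0 y); rewrite subrr normr0 distrC.
move=> /(_ d_gt0 uy_d) HLxy.
apply: le_lt_trans HLxy _; apply: le_lt_trans (ler_wpM2r (normr_ge0 _) (ler_norm L)) _.
rewrite ltr_pdivlMr // in uy_e; apply: le_lt_trans uy_e.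
by rewrite mulrC ler_wpM2l // lerDl.
Unshelve. all: by end_near.
Qed.

Lemma exists_pos_root (g : R -> R) (b : R) :
  continuous (g \o @ppart R) -> 0 < g 0 -> 0 <= b -> g b < 0 ->
  exists2 c, 0 < c & g c = 0.
Proof.
move=> g_cont g0_gt0 b_ge0 gb_lt0.
have := IVT b_ge0 (continuous_subspaceT g_cont) (v := 0).
rewrite /= ppart_id // ppart_id // ge_min le_max (ltW gb_lt0) (ltW g0_gt0) orbT.
case=> // c; rewrite in_itv /= => /andP[c_ge0 _]; rewrite ppart_id // => gc0.
exists c => //; rewrite lt_neqAle c_ge0 andbT eq_sym.
by apply/eqP => c0; move: g0_gt0; rewrite -{2}c0 gc0 ltxx.
Qed.

End Roots_on_nonneg_reals.

Section Deviatoric_decomposition.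
Variable R : realType.
Implicit Types (A n : 'M[R]_3) (c : R).

Lemma frob_dot_Id A : frob_dot (Id3 R) A = \tr A.
Proof.
rewrite /frob_dot /mxtrace; apply: eq_bigr => i _.
rewrite (bigD1 i) //= big1 => [|j /negPf ji]; rewrite !mxE.
  by rewrite eqxx mul1r addr0.
by rewrite eq_sym ji mul0r.
Qed.

Lemma pmeanE A : pmean A = 3^-1 * \tr A.
Proof. by rewrite /pmean frob_dot_Id. Qed.

Lemma pmeanZ c A : pmean (c *: A) = c * pmean A.
Proof. by rewrite !pmeanE mxtraceZ mulrCA. Qed.

Lemma pmean_eq0_trace A : pmean A = 0 -> \tr A = 0.
Proof. by move/eqP; rewrite pmeanE mulf_eq0 invr_eq0 pnatr_eq0 => /eqP. Qed.

Lemma pmean_dev A : pmean (dev A) = 0.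
Proof. by rewrite /dev !pmeanE raddfB /= mxtraceZ /Id3 mxtrace1; field. Qed.

Lemma pmean_dev_decomp A : A = pmean A *: Id3 R + dev A.
Proof. by rewrite /dev addrC subrK. Qed.

Lemma rho_ge0 A : 0 <= rho A.
Proof. exact: sqrtr_ge0. Qed.

Lemma frob_normZ c A : frob_norm (c *: A) = `|c| * frob_norm A.
Proof.
rewrite /frob_norm.
have -> : frob_dot (c *: A) (c *: A) = c ^+ 2 * frob_dot A A.
  rewrite /frob_dot mulr_sumr; apply: eq_bigr => i _; rewrite mulr_sumr.
  by apply: eq_bigr => j _; rewrite !mxE; ring.
by rewrite sqrtrM ?sqr_ge0 // sqrtr_sqr.
Qed.

Lemma frob_norm_eq0 A : frob_norm A = 0 -> A = 0.
Proof.
have sq_ge0 (i j : 'I_3) : 0 <= A i j * A i j by rewrite -expr2 sqr_ge0.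
have row_ge0 (i : 'I_3) : 0 <= \sum_(j < 3) A i j * A i j by apply: sumr_ge0.
move/eqP; rewrite sqrtr_eq0 => AA_le0.
have AA0 : frob_dot A A = 0 by apply/le_anti; rewrite AA_le0 sumr_ge0.
apply/matrixP => i j; rewrite mxE; apply/eqP; rewrite -sqrf_eq0 expr2; apply/eqP.
have rows0 := psumr_eq0P (fun i _ => row_ge0 i) AA0.
exact: psumr_eq0P (fun j _ => sq_ge0 i j) (rows0 i isT) j isT.
Qed.

Lemma sym3_dev A : sym3 A -> sym3 (dev A).
Proof. by rewrite /sym3 /dev /Id3 => symA; rewrite linearB linearZ /= tr_scalar_mx symA. Qed.

Lemma sym3_trial (sigtr n : 'M[R]_3) (dl a b : R) :
  sym3 sigtr -> sym3 n -> sym3 (sigtr - dl *: (a *: n + b *: Id3 R)).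
Proof.
rewrite /sym3 /Id3 => sym_tr sym_n.
by rewrite linearB linearZ linearD !linearZ /= tr_scalar_mx sym_tr sym_n.
Qed.

Lemma return_map_split (sigtr n : 'M[R]_3) (dl a b : R) :
  let sigma := sigtr - dl *: (a *: n + b *: Id3 R) in
  pmean n = 0 ->
  pmean sigma = pmean sigtr - dl * b /\ dev sigtr = dev sigma + (dl * a) *: n.
Proof.
move=> sigma pn0.
have p_sigma : pmean sigma = pmean sigtr - dl * b.
  rewrite /sigma !pmeanE raddfB /= mxtraceZ mxtraceD !mxtraceZ (pmean_eq0_trace pn0).
  by rewrite /Id3 mxtrace1; field.
split=> //; apply/matrixP => i j.
by rewrite /dev p_sigma /sigma !mxE; ring.
Qed.

Lemma subdiff_rho_pmean (sigma n : 'M[R]_3) : subdiff_rho sigma n -> pmean n = 0.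
Proof.
case=> [[_ ->]|[_ [_ [tr_n _]]]]; first by rewrite pmeanZ pmean_dev mulr0.
by rewrite /pmean tr_n mulr0.
Qed.

Lemma subdiff_rho_radial (sigma T n : 'M[R]_3) (c : R) :
  0 <= c -> subdiff_rho sigma n -> dev T = dev sigma + c *: n ->
  rho sigma = ppart (rho T - c) /\ dev sigma = (rho sigma / rho T) *: dev T.
Proof.
move=> c_ge0 [[rho_gt0 ->]|[rho0 [_ [_ n_le1]]]] devT.
- have rho_neq0 : rho sigma != 0 by rewrite gt_eqF.
  have devTE : dev T = ((rho sigma + c) / rho sigma) *: dev sigma.
    by rewrite devT scalerA -{1}[dev sigma]scale1r -scalerDl; congr (_ *: _); field.
  have rhoT : rho T = rho sigma + c.
    have coef_ge0 : 0 <= (rho sigma + c) / rho sigma.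
      by apply: divr_ge0 (ltW rho_gt0); apply: addr_ge0 (ltW rho_gt0) c_ge0.
    by rewrite {1}/rho devTE frob_normZ ger0_norm // -/(rho sigma) divfK.
  split; first by rewrite rhoT addrK ppart_id // ltW.
  rewrite devTE scalerA rhoT -[LHS]scale1r; congr (_ *: _).
  have rhoc_neq0 : rho sigma + c != 0 by rewrite gt_eqF // ltr_wpDr.
  by field; rewrite rhoc_neq0 rho_neq0.
- have dev0 : dev sigma = 0 by apply: frob_norm_eq0.
  split; last by rewrite rho0 mul0r scale0r.
  rewrite rho0 ppart_eq0 // subr_le0 /rho devT dev0 add0r frob_normZ ger0_norm //.
  by rewrite -[leRHS]mulr1 ler_wpM2l.
Qed.

(* When [rho sigtr = 0] the deviatoric factor is [0 / 0 = 0], harmlessly since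
   then [dev sigtr = 0]. *)
Definition return_stress (sigtr : 'M[R]_3) (dl a b : R) : 'M[R]_3 :=
  (pmean sigtr - dl * b) *: Id3 R + (ppart (rho sigtr - dl * a) / rho sigtr) *: dev sigtr.

Lemma subdiff_return_stress (sigtr sigma n : 'M[R]_3) (dl a b : R) :
  0 <= dl -> 0 <= a -> subdiff_rho sigma n ->
  sigma = sigtr - dl *: (a *: n + b *: Id3 R) ->
  [/\ pmean sigma = pmean sigtr - dl * b, rho sigma = ppart (rho sigtr - dl * a)
    & sigma = return_stress sigtr dl a b].
Proof.
move=> dl_ge0 a_ge0 n_sub sigmaE.
have [p_sigma dev_tr] := return_map_split sigtr dl a b (subdiff_rho_pmean n_sub).
rewrite -sigmaE in p_sigma dev_tr.
have [rho_sigma dev_sigma] := subdiff_rho_radial (mulr_ge0 dl_ge0 a_ge0) n_sub dev_tr.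
split=> //; by rewrite [LHS]pmean_dev_decomp p_sigma dev_sigma rho_sigma.
Qed.

Lemma exists_subdiff_trial (sigtr : 'M[R]_3) (dl a b : R) :
  sym3 sigtr -> 0 < dl -> 0 < a ->
  exists2 n, sym3 n & subdiff_rho (sigtr - dl *: (a *: n + b *: Id3 R)) n.
Proof.
move=> sym_tr dl_gt0 a_gt0; set da := dl * a.
have da_gt0 : 0 < da by rewrite mulr_gt0.
set m := Num.max (rho sigtr) da.
have m_gt0 : 0 < m by rewrite lt_max da_gt0 orbT.
(* The trial normal, shrunk into the unit ball when the return reaches the apex. *)
pose n := m^-1 *: dev sigtr.
have pn0 : pmean n = 0 by rewrite pmeanZ pmean_dev mulr0.
have sym_n : sym3 n by rewrite /n /sym3 linearZ /= sym3_dev.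
exists n => //; set sigma := _ - _.
have [_ dev_tr] := return_map_split sigtr dl a b pn0.
have dev_sigma : dev sigma = (1 - da / m) *: dev sigtr.
  by rewrite scalerBl scale1r -scalerA -/n dev_tr addrK.
have rho_sigma : rho sigma = (1 - da / m) * rho sigtr.
  by rewrite /rho dev_sigma frob_normZ ger0_norm // subr_ge0 ler_pdivrMr // mul1r le_max lexx orbT.
case: (ltP da (rho sigtr)) => [da_lt | rho_le].
- have m_rho : m = rho sigtr by rewrite /m max_l // ltW.
  have rho_gt0 : 0 < rho sigtr by apply: lt_trans da_lt.
  left; split.
    by rewrite rho_sigma m_rho mulrBl mul1r divfK ?gt_eqF // subr_gt0.
  rewrite dev_sigma scalerA rho_sigma /n m_rho; congr (_ *: _).
  by field; rewrite !gt_eqF // subr_gt0.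
- have m_da : m = da by rewrite /m max_r.
  have rho0 : rho sigma = 0 by rewrite rho_sigma m_da divff ?gt_eqF // subrr mul0r.
  right; split=> //; split=> //; split; first by rewrite frob_dot_Id pmean_eq0_trace.
  rewrite /n frob_normZ -/(rho sigtr) m_da ger0_norm; last by rewrite invr_ge0 ltW.
  by rewrite mulrC ler_pdivrMr // mul1r.
Qed.

End Deviatoric_decomposition.

Section Return_mapping.
Variables (R : realType) (K G eta etab xi c0 : R) (H : R -> R).
Variables (sigtr : 'M[R]_3) (epstr : R).
Hypotheses (K_gt0 : 0 < K) (G_gt0 : 0 < G) (eta_gt0 : 0 < eta) (etab_gt0 : 0 < etab).
Hypotheses (xi_gt0 : 0 < xi) (c0_gt0 : 0 < c0) (epstr_ge0 : 0 <= epstr).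
Hypotheses (H_ge0 : forall x, 0 <= x -> 0 <= H x).
Hypotheses (H_mono : forall x y, 0 <= x -> x <= y -> H x <= H y).
Hypothesis H_lip : loc_lipschitz_on (@nonneg_set R) H.

Let q := qtr K G eta etab xi c0 H sigtr epstr.

Lemma qtr0 : q 0 = fyield eta xi c0 sigtr (H epstr).
Proof. by rewrite /q /qtr /fyield /fhat !(mul0r, subr0, addr0) ppart_id // rho_ge0. Qed.

Lemma qtr_decreasing : {in `[0, +oo[ &, {homo q : x y /~ x < y}}.
Proof.
move=> y x; rewrite !in_itv /= !andbT => _ x_ge0 lt_xy; rewrite -subr_gt0.
set Px := ppart (rho sigtr - x * G * Num.sqrt 2).
set Py := ppart (rho sigtr - y * G * Num.sqrt 2).
set Hx := H (epstr + x * xi); set Hy := H (epstr + y * xi).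
have -> : q x - q y = Num.sqrt (2^-1) * (Px - Py) + eta * K * etab * (y - x) + xi * (Hy - Hx).
  by rewrite /q /qtr -/Px -/Py -/Hx -/Hy; ring.
have P_ge0 : 0 <= Num.sqrt (2^-1) * (Px - Py).
  apply: mulr_ge0; first exact: sqrtr_ge0.
  rewrite subr_ge0; apply: ppart_le.
  by rewrite lerB // !ler_wpM2r ?sqrtr_ge0 ?ltW.
have lin_gt0 : 0 < eta * K * etab * (y - x) by rewrite !mulr_gt0 // subr_gt0.
have Hxy_ge0 : 0 <= xi * (Hy - Hx).
  apply: mulr_ge0; first exact: ltW.
  rewrite subr_ge0; apply: H_mono.
    by rewrite addr_ge0 // mulr_ge0 // ltW.
  by rewrite lerD2l ler_wpM2r // ltW.
lra.
Qed.

Lemma qtr_eventually_neg : exists2 b, 0 <= b & q b < 0.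
Proof.
have EKe_gt0 : 0 < eta * K * etab by rewrite !mulr_gt0.
(* At [b] the pressure decrease alone outweighs [sqrt(1/2) rho + eta p]. *)
set b := (Num.sqrt (2^-1) * rho sigtr + `|eta * pmean sigtr|) / (eta * K * etab).
have b_ge0 : 0 <= b.
  apply: divr_ge0 (ltW EKe_gt0); apply: addr_ge0 (normr_ge0 _).
  exact: mulr_ge0 (sqrtr_ge0 _) (rho_ge0 _).
exists b => //.
have P_le : ppart (rho sigtr - b * G * Num.sqrt 2) <= rho sigtr.
  rewrite -[leRHS](ppart_id (rho_ge0 sigtr)); apply: ppart_le.
  by rewrite gerBl; apply: mulr_ge0 (mulr_ge0 b_ge0 (ltW G_gt0)) (sqrtr_ge0 _).
have pressure_b : eta * (pmean sigtr - b * K * etab)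
    = eta * pmean sigtr - (Num.sqrt (2^-1) * rho sigtr + `|eta * pmean sigtr|).
  by rewrite /b; field; rewrite !gt_eqF.
have Hb_ge0 : 0 <= xi * H (epstr + b * xi).
  apply: mulr_ge0 (ltW xi_gt0) (H_ge0 _).
  exact: addr_ge0 epstr_ge0 (mulr_ge0 b_ge0 (ltW xi_gt0)).
have := ler_wpM2l (sqrtr_ge0 (2^-1)) P_le.
have := ler_norm (eta * pmean sigtr); have := mulr_gt0 xi_gt0 c0_gt0.
rewrite /q /qtr pressure_b mulrDr; lra.
Qed.

Lemma qtr_ppart_continuous : continuous (q \o @ppart R).
Proof.
move=> x; have ppart_x : {for x, continuous (@ppart R)} by exact: continuous_ppart.
have cvg_linB r a b : {for x, continuous (fun y => r - ppart y * a * b)}.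
  apply: cvgB; first exact: cvg_cst.
  by apply: cvgM; [apply: cvgM |]; [exact: ppart_x | exact: cvg_cst ..].
have cvg_linD r c : {for x, continuous (fun y => r + ppart y * c)}.
  by apply: cvgD; [exact: cvg_cst | apply: cvgM; [exact: ppart_x | exact: cvg_cst]].
have shift_ge0 y : 0 <= epstr + ppart y * xi.
  exact: addr_ge0 epstr_ge0 (mulr_ge0 (ppart_ge0 _) (ltW xi_gt0)).
apply: cvgB; first apply: cvgD; apply: cvgM; try exact: cvg_cst.
- apply: (continuous_comp (f := fun y => rho sigtr - ppart y * G * Num.sqrt 2)).
    exact: cvg_linB.
  exact: continuous_ppart.
- exact: cvg_linB.
- apply: cvgD; first exact: cvg_cst.
  exact: loc_lipschitz_continuous_comp H_lip shift_ge0 (cvg_linD _ _).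
Qed.

Lemma qtr_pos_root :
  0 < fyield eta xi c0 sigtr (H epstr) -> exists2 dl, 0 < dl & q dl = 0.
Proof.
move=> f_gt0; have [b b_ge0 qb_lt0] := qtr_eventually_neg.
by apply: exists_pos_root qtr_ppart_continuous _ b_ge0 qb_lt0; rewrite qtr0.
Qed.

Lemma fyield_trial (sigma n : 'M[R]_3) (dl : R) :
  0 <= dl -> subdiff_rho sigma n ->
  sigma = sigtr - dl *: ((G * Num.sqrt 2) *: n + (K * etab) *: Id3 R) ->
  fyield eta xi c0 sigma (H (epstr + dl * xi)) = q dl.
Proof.
move=> dl_ge0 n_sub sigmaE.
have Ga_ge0 : 0 <= G * Num.sqrt 2 by rewrite mulr_ge0 ?sqrtr_ge0 // ltW.
have [p_sigma rho_sigma _] := subdiff_return_stress dl_ge0 Ga_ge0 n_sub sigmaE.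
by rewrite /fyield /fhat p_sigma rho_sigma /q /qtr !mulrA.
Qed.

Hypothesis sym_tr : sym3 sigtr.
Variable dl : R.
Hypotheses (dl_gt0 : 0 < dl) (q_dl : q dl = 0).

Let dl_ge0 : 0 <= dl. Proof. exact: ltW. Qed.
Let Ga := G * Num.sqrt 2.
Let Ga_gt0 : 0 < Ga. Proof. by rewrite mulr_gt0 // sqrtr_gt0. Qed.

Lemma qtr_root_unique d : 0 <= d -> q d = 0 -> d = dl.
Proof.
move=> d_ge0 qd0; apply: (dec_inj_in (le_nmono_in qtr_decreasing)).
- by rewrite in_itv /= andbT.
- by rewrite in_itv /= andbT.
- by rewrite qd0 q_dl.
Qed.

Lemma probR_iff p r e d :
  probR K G eta etab xi c0 H sigtr epstr p r e d <->
  [/\ p = pmean sigtr - dl * K * etab, r = ppart (rho sigtr - dl * G * Num.sqrt 2),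
      e = epstr + dl * xi & d = dl].
Proof.
split; last by case=> -> -> -> ->; do !split.
by case=> d_ge0 [-> [-> [-> /(qtr_root_unique d_ge0) ->]]].
Qed.

Lemma probP_iff sigma e d :
  probP K G eta etab xi c0 H sigtr epstr sigma e d <->
  [/\ sigma = return_stress sigtr dl Ga (K * etab), e = epstr + dl * xi & d = dl].
Proof.
split.
  case=> d_ge0 [_ [[n [n_sub sigmaE]] [-> f0]]].
  have d_dl : d = dl.
    by apply: (qtr_root_unique d_ge0); rewrite -(fyield_trial d_ge0 n_sub sigmaE).
  have [_ _ ->] := subdiff_return_stress d_ge0 (ltW Ga_gt0) n_sub sigmaE.
  by rewrite d_dl.
case=> -> -> ->.
have [n sym_n n_sub] := exists_subdiff_trial (K * etab) sym_tr dl_gt0 Ga_gt0.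
have [_ _ <-] := subdiff_return_stress dl_ge0 (ltW Ga_gt0) n_sub erefl.
do !split=> //.
- exact: sym3_trial.
- by exists n.
- by rewrite (fyield_trial dl_ge0 n_sub erefl).
Qed.

Lemma probQ_iff_probP sigma e d :
  0 < fyield eta xi c0 sigtr (H epstr) ->
  probQ K G eta etab xi c0 H sigtr epstr sigma e d <->
  probP K G eta etab xi c0 H sigtr epstr sigma e d.
Proof.
rewrite -qtr0 => q0_gt0; split.
  case=> sym_sigma [[n [n_sub sigmaE]] [-> [d_ge0 []]]].
  rewrite (fyield_trial d_ge0 n_sub sigmaE) => qd_le0 /eqP.
  have d_neq0 : d != 0 by apply: contraTneq qd_le0 => ->; rewrite -ltNge.
  rewrite mulf_eq0 (negbTE d_neq0) => /eqP qd0.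
  by do !split=> //; [exists n | rewrite (fyield_trial d_ge0 n_sub sigmaE)].
case=> d_ge0 [sym_sigma [n_ex [-> f0]]].
by do !split=> //; rewrite f0 ?mulr0.
Qed.

Let g0 := rho sigtr / Ga.

Lemma qtr_neg_at_elastic_limit :
  q g0 < 0 -> dl < g0 /\ 0 < ppart (rho sigtr - dl * G * Num.sqrt 2).
Proof.
have g0_ge0 : 0 <= g0 by rewrite divr_ge0 ?rho_ge0 // ltW.
rewrite -{1}q_dl (leW_nmono_in (le_nmono_in qtr_decreasing)) ?in_itv /= ?andbT //.
move=> dl_lt; split=> //.
by rewrite ppart_gt0 -mulrA subr_gt0 -ltr_pdivlMr.
Qed.

Lemma qtr_nonneg_at_elastic_limit :
  0 <= q g0 -> g0 <= dl /\ ppart (rho sigtr - dl * G * Num.sqrt 2) = 0.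
Proof.
have g0_ge0 : 0 <= g0 by rewrite divr_ge0 ?rho_ge0 // ltW.
rewrite -{1}q_dl (le_nmono_in qtr_decreasing) ?in_itv /= ?andbT //.
move=> g0_le; split=> //.
by rewrite ppart_eq0 // -mulrA subr_le0 -ler_pdivrMr.
Qed.

End Return_mapping.

Theorem theorem3 (R : realType) (K G eta etab xi c0 : R) (H : R -> R)
  (sigtr : 'M[R]_3) (epstr : R) :
  0 < K -> 0 < G -> 0 < eta -> 0 < etab -> 0 < xi -> 0 < c0 ->
  (forall x, 0 <= x -> 0 <= H x) ->
  (forall x y, 0 <= x -> x <= y -> H x <= H y) ->
  strongly_semismooth_nonneg H ->
  H 0 = 0 ->
  sym3 sigtr -> 0 <= epstr ->
  0 < fyield eta xi c0 sigtr (H epstr) ->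
  (* unique positive root of q_tr *)
  (exists dl, 0 < dl /\ qtr K G eta etab xi c0 H sigtr epstr dl = 0 /\
     forall dl', 0 < dl' -> qtr K G eta etab xi c0 H sigtr epstr dl' = 0 -> dl' = dl) /\
  (* (R) has a unique solution *)
  (exists p r e dl, probR K G eta etab xi c0 H sigtr epstr p r e dl /\
     forall p' r' e' dl', probR K G eta etab xi c0 H sigtr epstr p' r' e' dl' ->
       [/\ p' = p, r' = r, e' = e & dl' = dl]) /\
  (* (P) has a unique solution *)
  (exists sigma e dl, probP K G eta etab xi c0 H sigtr epstr sigma e dl /\
     forall sigma' e' dl', probP K G eta etab xi c0 H sigtr epstr sigma' e' dl' ->
       [/\ sigma' = sigma, e' = e & dl' = dl]) /\
  (* (Q) has a unique solution *)
  (exists sigma e dl, probQ K G eta etab xi c0 H sigtr epstr sigma e dl /\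
     forall sigma' e' dl', probQ K G eta etab xi c0 H sigtr epstr sigma' e' dl' ->
       [/\ sigma' = sigma, e' = e & dl' = dl]) /\
  (* the two cases, for the solution of (R) *)
  (forall p r e dl, probR K G eta etab xi c0 H sigtr epstr p r e dl ->
     let g0 := rho sigtr / (G * Num.sqrt 2) in
     (qtr K G eta etab xi c0 H sigtr epstr g0 < 0 -> (0 < dl /\ dl < g0) /\ 0 < r) /\
     (0 <= qtr K G eta etab xi c0 H sigtr epstr g0 -> g0 <= dl /\ r = 0)).
Proof.
move=> K_gt0 G_gt0 eta_gt0 etab_gt0 xi_gt0 c0_gt0 H_ge0 H_mono [H_lip _] _ sym_tr.
move=> epstr_ge0 f_gt0; have [dl dl_gt0 q_dl] :=
  qtr_pos_root K_gt0 G_gt0 eta_gt0 etab_gt0 xi_gt0 c0_gt0 epstr_ge0 H_ge0 H_lip f_gt0.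
have root_unique :=
  qtr_root_unique K_gt0 G_gt0 eta_gt0 etab_gt0 xi_gt0 epstr_ge0 H_mono dl_gt0 q_dl.
have R_iff := probR_iff K_gt0 G_gt0 eta_gt0 etab_gt0 xi_gt0 epstr_ge0 H_mono dl_gt0 q_dl.
have P_iff := probP_iff K_gt0 G_gt0 eta_gt0 etab_gt0 xi_gt0 epstr_ge0 H_mono sym_tr dl_gt0 q_dl.
have Q_iff sigma e d := probQ_iff_probP K etab G_gt0 sigma e d f_gt0.
have [limit_neg limit_nonneg] :=
  (qtr_neg_at_elastic_limit K_gt0 G_gt0 eta_gt0 etab_gt0 xi_gt0 epstr_ge0 H_mono dl_gt0 q_dl,
   qtr_nonneg_at_elastic_limit K_gt0 G_gt0 eta_gt0 etab_gt0 xi_gt0 epstr_ge0 H_mono dl_gt0 q_dl).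
split; first by exists dl; do 2!split=> //; move=> d d_gt0; exact: root_unique (ltW d_gt0).
split.
  exists (pmean sigtr - dl * K * etab), (ppart (rho sigtr - dl * G * Num.sqrt 2)).
  exists (epstr + dl * xi), dl.
  by split=> [|p r e d /R_iff //]; apply/R_iff.
split.
  exists (return_stress sigtr dl (G * Num.sqrt 2) (K * etab)), (epstr + dl * xi), dl.
  by split=> [|sigma e d /P_iff //]; apply/P_iff.
split.
  exists (return_stress sigtr dl (G * Num.sqrt 2) (K * etab)), (epstr + dl * xi), dl.
  by split=> [|sigma e d /Q_iff/P_iff //]; apply/Q_iff/P_iff.
move=> p r e d /R_iff[_ -> _ ->] /=.
by split=> [/limit_neg[dl_lt r_gt0] | /limit_nonneg].
Qed.
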